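(* Let $f: S^1 \rightarrow S^1$ be a Morse-Smale diffeomorphism. Then the topological entropy of the induced continuum map $C(f): C(S^1)\to C(S^1)$ is zero.
   Context: A $C^r$ diffeomorphism ($r\ge1$) is Morse-Smale if its nonwandering set consists of finitely many periodic points, all hyperbolic, with mutually transversal stable and unstable manifolds. $C(S^1)$ is the hyperspace of nonempty compact connected subsets of $S^1$ with the Hausdorff metric and $C(f)(A)=f(A)$. *)

From HB Require Import structures.
From mathcomp Require Import all_boot all_order all_algebra.
From mathcomp Require Import all_classical all_reals all_analysis.
Set Implicit Arguments. Unset Strict Implicit. Unset Printing Implicit Defensive.
Import Order.TTheory GRing.Theory Num.Theory.
Import numFieldNormedType.Exports.
Local Open Scope classical_set_scope.
Local Open Scope ring_scope.

Section Circle.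
Variable R : realType.
Implicit Types (p q : R * R) (t : R).

Definition pdist p q : R := Num.sqrt ((p.1 - q.1) ^+ 2 + (p.2 - q.2) ^+ 2).

Definition S1 : set (R * R) := [set p | p.1 ^+ 2 + p.2 ^+ 2 = 1].
Definition expc t : R * R := (cos (2 * pi * t), sin (2 * pi * t)).

Definition is_lift (f : R * R -> R * R) (F : R -> R) :=
  forall t, f (expc t) = expc (F t).

(** f restricted to S^1 is a C^1 diffeomorphism of S^1: it is a bijection of
    S^1 having a C^1 lift with nowhere vanishing derivative. *)
Definition C1_lift (F : R -> R) :=
  (forall t, derivable F t 1) /\ continuous (derive1 F) /\ (forall t, derive1 F t != 0).

Definition C1_diffeo_S1 (f : R * R -> R * R) (F : R -> R) :=
  set_bij S1 S1 f /\ is_lift f F /\ C1_lift F.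

Definition periodic_pt (f : R * R -> R * R) p :=
  S1 p /\ exists2 n : nat, (0 < n)%N & iter n f p = p.

(** hyperbolicity: |(f^n)'(p)| <> 1, the derivative computed in the angle
    coordinate through the lift F (well defined). *)
Definition hyperbolic_pt (f : R * R -> R * R) (F : R -> R) p :=
  forall (t : R) (n : nat), expc t = p -> (0 < n)%N -> iter n f p = p ->
    `| derive1 (iter n F) t | != 1.

Definition nonwandering (f : R * R -> R * R) : set (R * R) :=
  [set x | S1 x /\ forall e : R, 0 < e ->
     exists n : nat, (0 < n)%N /\
       exists y, S1 y /\ pdist y x < e /\ pdist (iter n f y) x < e].

Definition Wstable (f : R * R -> R * R) p : set (R * R) :=
  [set x | S1 x /\ (fun k => pdist (iter k f x) (iter k f p)) @ \oo --> (0:R)].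

Definition Wunstable (f : R * R -> R * R) p : set (R * R) :=
  [set x | S1 x /\ exists xs ps : nat -> R * R,
     [/\ xs 0%N = x, ps 0%N = p,
         (forall k, S1 (xs k) /\ S1 (ps k)),
         (forall k, f (xs k.+1) = xs k /\ f (ps k.+1) = ps k) &
         (fun k => pdist (xs k) (ps k)) @ \oo --> (0:R)]].

(** A subset A of S^1 has a nonzero tangent vector at x: there is a C^1-at-0
    curve (in the angle coordinate) through x, staying in A near 0, with
    nonzero velocity. *)
Definition nonzero_tangent (A : set (R * R)) (x : R * R) :=
  exists (g : R -> R), expc (g 0) = x /\ derivable g 0 1 /\ derive1 g 0 != 0 /\
    \forall s \near (0:R), A (expc (g s)).

(** Transversality in the 1-dimensional manifold S^1:
    T_x A + T_x B = T_x S^1 (= R) at every intersection point x, i.e.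
    one of the tangent spaces is nonzero. *)
Definition transversal (A B : set (R * R)) :=
  forall x, A x -> B x -> nonzero_tangent A x \/ nonzero_tangent B x.

(** Morse-Smale diffeomorphism of S^1 (C^r, r >= 1; we use r = 1, which is
    the most general case). *)
Definition morse_smale (f : R * R -> R * R) :=
  exists F : R -> R, C1_diffeo_S1 f F /\
    finite_set (nonwandering f) /\
    (forall p, nonwandering f p -> periodic_pt f p /\ hyperbolic_pt f F p) /\
    (forall p q, nonwandering f p -> nonwandering f q ->
       transversal (Wstable f p) (Wunstable f q)).

Definition CS1 : set (set (R * R)) :=
  [set A | A !=set0 /\ A `<=` S1 /\ compact A /\ connected A].

Definition hausdorff_dist (A B : set (R * R)) : R :=
  Num.max (sup [set inf [set pdist a b | b in B] | a in A])
          (sup [set inf [set pdist a b | a in A] | b in B]).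

Definition Cmap (f : R * R -> R * R) (A : set (R * R)) : set (R * R) := f @` A.

End Circle.

(** Topological entropy (Bowen's separated-set definition) of g : X -> X on
    a compact metric space (X, d). *)
Section Entropy.
Variables (R : realType) (T : Type).

Definition separated_family (X : set T) (d : T -> T -> R) (g : T -> T)
  (n : nat) (e : R) (m : nat) (E : 'I_m -> T) :=
  (forall i, X (E i)) /\
  (forall i j, i != j -> exists2 k : nat, (k < n)%N &
       e < d (iter k g (E i)) (iter k g (E j))).

Definition max_separated X d g n e : \bar R :=
  ereal_sup [set (m%:R)%:E | m in [set m : nat |
     exists E, @separated_family X d g n e m E]].

Definition elog (x : \bar R) : \bar R :=
  match x with
  | r%:E => (ln r)%:E
  | +oo%E => +oo%E
  | -oo%E => -oo%E
  end.

Local Open Scope ereal_scope.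
Definition topological_entropy (X : set T) (d : T -> T -> R) (g : T -> T)
  : \bar R :=
  ereal_sup [set limn_esup (fun n : nat =>
                 ((n%:R)^-1)%:E * elog (max_separated X d g n e))
            | e in [set e : R | (0 < e)%R]].
End Entropy.

From HB Require Import structures.
From mathcomp Require Import all_boot all_order all_algebra.
From mathcomp Require Import all_classical all_reals all_analysis.
From mathcomp Require Import ring lra zify.
Set Implicit Arguments. Unset Strict Implicit. Unset Printing Implicit Defensive.
Import Order.TTheory GRing.Theory Num.Theory.
Import numFieldNormedType.Exports.
Local Open Scope classical_set_scope.
Local Open Scope ring_scope.

(* Its lift F is
   strictly monotone with F (t + 1) = F t + s, s = 1 or -1, so the oriented
   iterates s^k F^k are nondecreasing and commute with the unit translation.
   Fix a time n and a scale 1/N.  On [0, 1] the integer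
   code u = sum_(k < n) (floor (N s^k F^k u) - floor (N s^k F^k 0))
   is nondecreasing with at most nN + 1 values, and points with the same code
   have their first n iterates within 4 pi / N of each other.  A subcontinuum
   of S^1 is an arc, so the codes it meets form a cyclic interval, and there
   are O((nN)^2) of those; two subcontinua meeting the same codes stay
   4 pi / N close in the Hausdorff metric up to time n.  Hence (n, e)-separated
   families of subcontinua have polynomial size in n, and C(f) has zero
   entropy. *)
Section CircleCovering.
Variable R : realType.
Implicit Types (t u x y : R).

Lemma expcD1 t : expc (t + 1) = expc t.
Proof. by rewrite /expc mulrDr mulr1 mulr_natl cosD2pi sinD2pi. Qed.

Lemma expcDz t (k : int) : expc (t + k%:~R) = expc t.
Proof.
have expcDn u n : expc (u + n%:R) = expc u.
  by elim: n => [|n IH]; rewrite ?addr0 // -natr1 addrA expcD1.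
case: k => n; first by rewrite -pmulrn expcDn.
by rewrite NegzE mulrNz -pmulrn -(expcDn _ n.+1) subrK.
Qed.

Lemma expc_S1 t : S1 (expc t).
Proof. by rewrite /S1 /expc /= cos2Dsin2. Qed.

Lemma cos_2piM_eq1 u : 0 <= u < 1 -> cos (2 * pi * u) = 1 -> u = 0.
Proof.
move=> /andP[u0 u1] cu.
have pi0 := @pi_gt0 R.
have half (v : R) : 0 <= v <= 2^-1 -> cos (2 * pi * v) = 1 -> v = 0.
  move=> /andP[v0 v1] cv.
  suff : 2 * pi * v = 0 by move=> h; nra.
  by apply: cos_inj; rewrite ?cv ?cos0 // in_itv /=; apply/andP; split; nra.
have [uh|uh] := leP u 2^-1; first by apply: half; rewrite ?u0.
suff : 1 - u = 0 by lra.
apply: half; first by apply/andP; split; lra.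
by rewrite mulrBr mulr1 mulr_natl -[X in cos X]addrC cosD2pi cosN -mulr_natl.
Qed.

Lemma expc_eq x y : expc x = expc y -> exists k : int, x = y + k%:~R.
Proof.
move=> e.
have c1 : cos (2 * pi * (x - y)) = 1.
  by case: e => cx sx; rewrite mulrBr cosB cx sx -!expr2 cos2Dsin2.
exists (Num.floor (x - y)).
suff : x - y - (Num.floor (x - y))%:~R = 0 by lra.
apply: cos_2piM_eq1.
  by have := floor_itv (x - y); rewrite intrD /=; lra.
by have [+ _] := expcDz (x - y) (- Num.floor (x - y)); rewrite c1 intrN.
Qed.

Lemma S1_expc p : S1 p -> exists t, expc t = p.
Proof.
case: p => p1 p2; rewrite /S1 /= => h.
have p1_itv : -1 <= p1 <= 1 by apply/andP; split; nra.
have cp : cos (acos p1) = p1 by apply: acosK; rewrite in_itv.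
have sp : sin (acos p1) = `|p2|.
  by rewrite sin_acos // -sqrtr_sqr; congr Num.sqrt; lra.
have expc_angle th : expc (th / (2 * pi)) = (cos th, sin th).
  by rewrite /expc mulrC divfK // mulf_neq0 // gt_eqF // pi_gt0.
have [p2ge|p2lt] := leP 0 p2.
  by exists (acos p1 / (2 * pi)); rewrite expc_angle cp sp ger0_norm.
exists (- acos p1 / (2 * pi)).
by rewrite expc_angle cosN sinN cp sp ltr0_norm // opprK.
Qed.

Lemma S1_expc_itv p b : S1 p -> exists u, [/\ b <= u, u < b + 1 & expc u = p].
Proof.
move=> /S1_expc [t <-]; exists (t - (Num.floor (t - b))%:~R).
have := floor_itv (t - b); rewrite intrD /= => /andP[h1 h2].
by split; [lra|lra|rewrite -intrN expcDz].
Qed.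

Lemma ler_dist_derive1 (g dg : R -> R) :
  (forall x, is_derive x 1 g (dg x)) -> (forall x, `|dg x| <= 1) ->
  forall a b, `|g b - g a| <= `|b - a|.
Proof.
move=> gd dg1.
have gc : continuous g.
  move=> x; apply/differentiable_continuous/derivable1_diffP.
  exact: @ex_derive _ _ _ _ _ _ _ (gd x).
suff le_ab a b : a <= b -> `|g b - g a| <= `|b - a|.
  by move=> a b; have [/le_ab//|/ltW/le_ab] := leP a b; rewrite distrC (distrC b).
move=> ab; have [c _ ->] := MVT_segment ab (fun x _ => gd x) (continuous_subspaceT gc).
by rewrite normrM ler_piMl.
Qed.

Lemma pdist_expc_le x y : pdist (expc x) (expc y) <= 4 * pi * `|x - y|.
Proof.
have pi0 := @pi_gt0 R.
rewrite /pdist /expc /=.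
set a := 2 * pi * x; set b := 2 * pi * y.
have hab : `|a - b| = 2 * pi * `|x - y|.
  by rewrite /a /b -mulrBr normrM ger0_norm //; nra.
have sinN_le1 t : `|- sin t| <= 1 by rewrite normrN sin_max.
have hc := ler_dist_derive1 (g := cos) (fun t => is_derive_cos t) sinN_le1 b a.
have hs := ler_dist_derive1 (g := sin) (fun t => is_derive_sin t) (@cos_max R) b a.
rewrite hab in hc hs.
have w0 := normr_ge0 (x - y).
have bound0 : 0 <= 4 * pi * `|x - y| by nra.
rewrite -[leRHS]ger0_norm // -sqrtr_sqr ler_sqrt ?sqr_ge0 //.
rewrite -(real_normK (num_real (cos a - cos b))) -(real_normK (num_real (sin a - sin b))).
have c0 := normr_ge0 (cos a - cos b); have s0 := normr_ge0 (sin a - sin b).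
have hc2 : `|cos a - cos b| ^+ 2 <= (2 * pi * `|x - y|) ^+ 2.
  by rewrite ler_sqr // ?nnegrE; nra.
have hs2 : `|sin a - sin b| ^+ 2 <= (2 * pi * `|x - y|) ^+ 2.
  by rewrite ler_sqr // ?nnegrE; nra.
nra.
Qed.

End CircleCovering.

Section ContinuousReal.
Variable R : realType.
Implicit Types g : R -> R.

Lemma continuous_ivt g a b v : continuous g -> g a <= v <= g b ->
  exists c, g c = v.
Proof.
move=> gc /andP[av vb].
have mM : Num.min (g a) (g b) <= v <= Num.max (g a) (g b).
  by rewrite ge_min le_max av vb orbT.
have [ab|ba] := leP a b.
  by have [c _ <-] := IVT ab (continuous_subspaceT gc) mM; exists c.
rewrite minC maxC in mM.
by have [c _ <-] := IVT (ltW ba) (continuous_subspaceT gc) mM; exists c.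
Qed.

Lemma continuous_nonvanishing_sign g : continuous g -> (forall t, g t != 0) ->
  exists2 s : R, s = 1 \/ s = -1 & forall t, 0 < s * g t.
Proof.
move=> gc gnz.
have keep_pos (h : R -> R) (a b : R) :
    continuous h -> (forall t, h t != 0) -> 0 < h a -> 0 < h b.
  move=> hc hnz ha; rewrite lt_neqAle eq_sym hnz leNgt; apply/negP => hb.
  have [|c hc0] := continuous_ivt (v := 0) (a := b) (b := a) hc.
    by rewrite (ltW hb) (ltW ha).
  by move: (hnz c); rewrite hc0 eqxx.
have [g0|g0] := ltP 0 (g 0).
  exists 1; first by left.
  by move=> t; rewrite mul1r; exact: keep_pos g0.
exists (-1); first by right.
move=> t; rewrite mulN1r; apply: (keep_pos (- g) 0).
- by move=> x; apply: continuousN; exact: gc.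
- by move=> x; rewrite oppr_eq0.
- by rewrite oppr_gt0 lt_neqAle gnz.
Qed.

End ContinuousReal.

Section CircleLift.
Variable R : realType.
Implicit Types (f : R * R -> R * R) (F : R -> R) (s : R).

Lemma intr_neq_half (k : int) : k%:~R != 2^-1 :> R.
Proof.
apply/eqP => k_half.
have : (k * 2)%:~R = 1%:~R :> R by rewrite intrM k_half mulVf.
by move/intr_inj; lia.
Qed.

Lemma continuous_int_valued_const (g : R -> R) : continuous g ->
  (forall t, exists k : int, g t = k%:~R) -> forall a b, g a = g b.
Proof.
move=> gc gint.
have no_jump a b (ka kb : int) : g a = ka%:~R -> g b = kb%:~R -> ka < kb -> False.
  move=> ea eb lt_ab.
  have [|c gc_half] := continuous_ivt (v := ka%:~R + 2^-1) (a := a) (b := b) gc.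
    have : (ka + 1)%:~R <= kb%:~R :> R by rewrite ler_int; lia.
    by rewrite ea eb intrD => ?; apply/andP; split; lra.
  have [kc ec] := gint c.
  by move: (intr_neq_half (kc - ka)); rewrite intrB -ec gc_half addrC addKr eqxx.
move=> a b; have [ka ea] := gint a; have [kb eb] := gint b.
case: (ltgtP ka kb) => [lt_ab|lt_ba|eq_ab]; last by rewrite ea eb eq_ab.
- by case: (no_jump _ _ _ _ ea eb lt_ab).
- by case: (no_jump _ _ _ _ eb ea lt_ba).
Qed.

Lemma C1_lift_continuous F : C1_lift F -> continuous F.
Proof.
move=> [der _] t.
by apply: differentiable_continuous; apply/derivable1_diffP; exact: der.
Qed.

Lemma C1_lift_strict_mono F : C1_lift F ->
  exists2 s, s = 1 \/ s = -1 & forall x y, x < y -> s * F x < s * F y.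
Proof.
move=> CF; have Fc := C1_lift_continuous CF; case: CF => [der [dc dnz]].
have [s hs sF'] := continuous_nonvanishing_sign dc dnz.
exists s => // x y xy.
have hd z : z \in `]x, y[ -> is_derive z 1 F (derive1 F z).
  by move=> _; rewrite derive1E; exact/derivableP/der.
have [c _ e] := MVT xy hd (continuous_subspaceT Fc).
have := sF' c; have : 0 < y - x by lra.
by move: e; set D := derive1 F c; nra.
Qed.

Lemma lift_shift_int f F : is_lift f F -> continuous F ->
  exists k : int, forall t, F (t + 1) = F t + k%:~R.
Proof.
move=> lift Fc; pose g t := F (t + 1) - F t.
have gc : continuous g.
  move=> t; apply: continuousB; last exact: Fc.
  by apply: (continuous_comp _ (Fc _)); apply: continuousD; [exact: cvg_id|exact: cvg_cst].
have gint t : exists k : int, g t = k%:~R.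
  have /expc_eq [k ek] : expc (F (t + 1)) = expc (F t) by rewrite -!lift expcD1.
  by exists k; rewrite /g ek addrAC subrr add0r.
have [k gk] := gint 0; exists k => t.
by rewrite -gk -(continuous_int_valued_const gc gint t 0) /g addrCA subrr addr0.
Qed.

Section Degree.
Variables (f : R * R -> R * R) (F : R -> R) (s : R) (k : int).
Hypotheses (finj : {in @S1 R &, injective f}) (lift : is_lift f F) (Fc : continuous F).
Hypotheses (hs : s = 1 \/ s = -1) (mono : forall x y, x < y -> s * F x < s * F y).
Hypothesis Fk : forall t, F (t + 1) = F t + k%:~R.

Let F1 : F 1 = F 0 + k%:~R.
Proof. by rewrite -Fk add0r. Qed.

Let ss : s * s = 1.
Proof. by case: hs => ->; rewrite ?mulr1 ?mulrNN ?mulr1. Qed.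

(* Otherwise some c in ]0, 1[ has F c = F 0 + s, and f identifies [expc c] with [expc 0]. *)
Lemma lift_shift_le1 : s * k%:~R <= 1.
Proof.
rewrite leNgt; apply/negP => sk_gt1.
have monoW x y : x <= y -> s * F x <= s * F y.
  by rewrite le_eqVlt => /orP[/eqP->//|/mono/ltW].
have sFc : continuous (fun x => s * F x).
  by move=> x; apply: continuousM; [exact: cvg_cst|exact: Fc].
have [|c ec] := continuous_ivt (v := s * F 0 + 1) (a := 0) (b := 1) sFc.
  by rewrite /= F1 mulrDr; apply/andP; split; lra.
have c_gt0 : 0 < c by rewrite ltNge; apply/negP => /monoW; rewrite ec; lra.
have c_lt1 : c < 1 by rewrite ltNge; apply/negP => /monoW; rewrite ec F1 mulrDr; lra.
have Fc_eq : F c = F 0 + s.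
  by rewrite -[F c]mul1r -ss -mulrA ec mulrDr mulrA ss mul1r mulr1.
have : expc c = expc 0.
  apply: finj; [exact/mem_set/expc_S1 | exact/mem_set/expc_S1 | rewrite !lift Fc_eq].
  by case: hs => ->; [rewrite expcD1 | have := expcDz (F 0) (-1); rewrite intrN].
move/expc_eq => [j]; rewrite add0r => cj.
by move: c_gt0 c_lt1; rewrite cj ltr0z ltrz1; lia.
Qed.

Lemma lift_degree : k%:~R = s.
Proof.
have sk_gt0 : 0 < s * k%:~R by have := mono ltr01; rewrite F1 mulrDr; lra.
have := lift_shift_le1; case: hs => hs1; rewrite hs1 in sk_gt0 *.
  by rewrite !mul1r ltr0z lerz1 in sk_gt0 * => ?; have -> : k = 1 by lia.
rewrite !mulN1r oppr_gt0 lerNl ltrz0 in sk_gt0 * => k_ge.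
have : (-1 <= k)%R by rewrite -(ler_int R).
by move=> ?; have -> : k = -1 by lia.
Qed.

End Degree.

Lemma C1_diffeo_S1_lift f F : C1_diffeo_S1 f F -> exists2 s, s = 1 \/ s = -1 &
  (forall t, F (t + 1) = F t + s) /\ (forall x y, x < y -> s * F x < s * F y).
Proof.
move=> [[_ finj _] [lift CF]]; have Fc := C1_lift_continuous CF.
have [s hs mono] := C1_lift_strict_mono CF; have [k Fk] := lift_shift_int lift Fc.
by exists s => //; split=> // t; rewrite Fk (lift_degree finj lift Fc hs mono Fk).
Qed.

End CircleLift.

Section OrientedIterates.
Variable R : realType.
Variables (f : R * R -> R * R) (F : R -> R) (s : R).
Hypotheses (hs : s = 1 \/ s = -1) (lift : is_lift f F).
Hypotheses (Fd : forall t, F (t + 1) = F t + s)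
  (mono : forall x y, x < y -> s * F x < s * F y).

Lemma iter_lift k t : iter k f (expc t) = expc (iter k F t).
Proof. by elim: k => [//|k IH]; rewrite !iterS IH lift. Qed.

Let sign_exp k : s ^+ k = 1 \/ s ^+ k = -1.
Proof.
elim: k => [|k [IH|IH]]; first by left; rewrite expr0.
  by rewrite exprS IH mulr1.
by rewrite exprS IH; case: hs => ->; [right|left]; ring.
Qed.

Lemma iterD1 k t : iter k F (t + 1) = iter k F t + s ^+ k.
Proof.
elim: k => [|k IH]; first by rewrite expr0.
have Fdm x : F (x - 1) = F x - s by rewrite -[in RHS](subrK 1 x) Fd addrK.
by rewrite !iterS IH exprS; case: (sign_exp k) => ->; rewrite ?Fd ?Fdm; ring.
Qed.

Definition oriented_iter k t := s ^+ k * iter k F t.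

Lemma oriented_iterD1 k t : oriented_iter k (t + 1) = oriented_iter k t + 1.
Proof. by rewrite /oriented_iter iterD1 mulrDr; case: (sign_exp k) => ->; ring. Qed.

Lemma oriented_iter_mono k : {homo oriented_iter k : x y / x <= y}.
Proof.
have monoW x y : x <= y -> s * F x <= s * F y.
  by rewrite le_eqVlt => /orP[/eqP->//|/mono/ltW].
move=> x y xy; elim: k => [|k IH]; first by rewrite /oriented_iter !expr0 !mul1r.
rewrite /oriented_iter !iterS exprS.
case: (sign_exp k) => e; rewrite /oriented_iter e in IH *.
  by rewrite !mul1r in IH; rewrite !mulr1; exact: monoW.
by rewrite !mulN1r lerN2 in IH; have := monoW _ _ IH; lra.
Qed.

Lemma dist_oriented_iter k x y :
  `|oriented_iter k x - oriented_iter k y| = `|iter k F x - iter k F y|.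
Proof.
rewrite /oriented_iter -mulrBr normrM.
by case: (sign_exp k) => ->; rewrite ?normrN normr1 mul1r.
Qed.

End OrientedIterates.

Section ConnectedSubsetsOfS1.
Variable R : realType.
Implicit Types (a b c d u v w : R).

Lemma cos_2piM_gt v w : 0 < w < 1 -> `|v| < w / 2 ->
  cos (pi * w) < cos (2 * pi * v).
Proof.
move=> /andP[w0 w1] vw.
have pi0 := @pi_gt0 R; have nv := normr_ge0 v.
rewrite -(cos_norm (2 * pi * v)) normrM (@ger0_norm _ (2 * pi)); last by nra.
by rewrite ltr_cos ?in_itv /=; [nra | apply/andP; split; nra | apply/andP; split; nra].
Qed.

Lemma cos_2piM_lt v w : 0 < w < 1 -> w / 2 < v < 1 - w / 2 ->
  cos (2 * pi * v) < cos (pi * w).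
Proof.
move=> /andP[w0 w1] /andP[v1 v2].
have pi0 := @pi_gt0 R.
have [vh|vh] := leP v 2^-1.
  by rewrite ltr_cos ?in_itv /=; [nra | apply/andP; split; nra | apply/andP; split; nra].
have -> : cos (2 * pi * v) = cos (2 * pi * (1 - v)).
  by rewrite mulrBr mulr1 mulr_natl addrC cosD2pi cosN -mulr_natl.
by rewrite ltr_cos ?in_itv /=; [nra | apply/andP; split; nra | apply/andP; split; nra].
Qed.

(* Its zero set is the line through [expc b] and [expc d], so its sign tells
   apart the two open arcs of S^1 between these points. *)
Definition chord_sep b d (p : R * R) : R :=
  p.1 * cos (2 * pi * ((b + d) / 2)) + p.2 * sin (2 * pi * ((b + d) / 2))
  - cos (pi * (d - b)).

Lemma chord_sep_expc b d u :
  chord_sep b d (expc u) = cos (2 * pi * (u - (b + d) / 2)) - cos (pi * (d - b)).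
Proof. by rewrite /chord_sep /expc /= (mulrBr (2 * pi) u) (cosB (2 * pi * u)). Qed.

Lemma continuous_chord_sep b d : continuous (chord_sep b d).
Proof.
move=> p; rewrite /chord_sep.
set cm := cos _; set sm := sin _; set cw := cos _.
apply: (@continuousB _ _ _ (fun q : R * R => q.1 * cm + q.2 * sm) (fun=> cw)).
  apply: (@continuousD _ _ _ (fun q : R * R => q.1 * cm) (fun q : R * R => q.2 * sm)).
    by apply: (@continuousM _ _ fst (fun=> cm)); [exact: cvg_fst|exact: cvg_cst].
  by apply: (@continuousM _ _ snd (fun=> sm)); [exact: cvg_snd|exact: cvg_cst].
exact: cvg_cst.
Qed.

Lemma chord_sep_gt0 b d u : d - b < 1 -> b < u < d -> 0 < chord_sep b d (expc u).
Proof.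
move=> db /andP[bu ud]; rewrite chord_sep_expc subr_gt0 cos_2piM_gt.
- by [].
- by apply/andP; split; lra.
- by rewrite ltr_norml; apply/andP; split; lra.
Qed.

Lemma chord_sep_lt0 b d u : b < d -> d < u < b + 1 -> chord_sep b d (expc u) < 0.
Proof.
move=> bd /andP[du ub]; rewrite chord_sep_expc subr_lt0 cos_2piM_lt //.
- by apply/andP; split; lra.
- by apply/andP; split; lra.
Qed.

Lemma connected_S1_no_alternation (A : set (R * R)) a b c d :
  connected A -> A `<=` @S1 R -> a < b -> b < c -> c < d -> d < a + 1 ->
  A (expc a) -> ~ A (expc b) -> A (expc c) -> ~ A (expc d) -> False.
Proof.
move=> Acon AS ab bc cd da Aa Nb Ac Nd.
have L_itv : is_interval (chord_sep b d @` A).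
  apply/connected_intervalP/connected_continuous_connected => //.
  exact/continuous_subspaceT/continuous_chord_sep.
have La : chord_sep b d (expc a) < 0.
  by rewrite -expcD1 chord_sep_lt0 //; [lra | apply/andP; split; lra].
have Lc : 0 < chord_sep b d (expc c) by apply: chord_sep_gt0; [lra | apply/andP].
have [|p Ap Lp] := L_itv _ _ (ex_intro2 _ _ _ Aa erefl) (ex_intro2 _ _ _ Ac erefl) 0.
  by rewrite (ltW La) (ltW Lc).
have [u [bu ub eu]] := S1_expc_itv b (AS _ Ap); rewrite -eu in Ap Lp.
have [eq_bu|ne_bu] := eqVneq b u; first by apply: Nb; rewrite eq_bu.
have {ne_bu}bu : b < u by rewrite lt_neqAle ne_bu.
have [ud|du|eq_ud] := ltgtP u d; last by apply: Nd; rewrite -eq_ud.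
- suff : 0 < chord_sep b d (expc u) by rewrite Lp ltxx.
  by apply: chord_sep_gt0; [lra | rewrite bu ud].
- suff : chord_sep b d (expc u) < 0 by rewrite Lp ltxx.
  by apply: chord_sep_lt0; [lra | rewrite du ub].
Qed.

End ConnectedSubsetsOfS1.

Section CyclicIntervals.
Local Open Scope nat_scope.
Implicit Types (D P Q : nat -> Prop) (M : nat).

Definition cyclic_itv (b c : nat) (wrap : bool) (x : nat) : bool :=
  if wrap then (x < b) || (c <= x) else b <= x < c.

Definition no_alternation P Q := forall x y z w, x < y -> y < z -> z < w ->
  P x -> Q y -> P z -> Q w -> False.

Lemma least_or_bound P M : (forall x, P x -> x <= M) ->
  exists b, [/\ b <= M.+1, forall x, P x -> b <= x & b <= M -> P b].
Proof.
move=> PM; have [[x Px]|noP] := pselect (exists x, P x); last first.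
  by exists M.+1; split=> // [x Px|]; [case: noP; exists x | rewrite ltnn].
have exb : exists x, `[< P x >] by exists x; apply/asboolP.
case: (ex_minnP exb) => b /asboolP Pb minb.
exists b; split=> // [|y Py]; first by rewrite ltnW // ltnS PM.
by apply: minb; apply/asboolP.
Qed.

Lemma no_alternation_itv D P M : (forall x, D x -> x <= M) ->
  (forall x, P x -> D x) -> D 0 -> ~ P 0 -> no_alternation (fun x => D x /\ ~ P x) P ->
  exists b c, [/\ b <= M.+1, c <= M.+1 & forall x, D x -> P x <-> b <= x < c].
Proof.
move=> DM PD D0 NP0 alt.
have [b [bM minb Pb]] := least_or_bound (fun x Px => DM x (PD x Px)).
pose Q x := (D x /\ ~ P x) /\ b <= x.
have [c [cM minc Qc]] := least_or_bound (P := Q) (fun x Qx => DM x Qx.1.1).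
exists b, c; split=> // x Dx; split=> [Px|/andP[bx xc]]; last first.
  have [//|NPx] := pselect (P x).
  by have := minc x (conj (conj Dx NPx) bx); rewrite leqNgt xc.
have bx := minb x Px; rewrite bx /= ltnNge; apply/negP => cx.
have xM := DM x Dx.
have [[Dc NPc] bc] := Qc (leq_trans cx xM).
have {}Pb := Pb (leq_trans bx xM).
have b_gt0 : 0 < b by rewrite lt0n; apply/eqP => b0; apply: NP0; rewrite -b0.
have b_lt_c : b < c by rewrite ltn_neqAle bc andbT; apply/eqP => e; apply: NPc; rewrite -e.
have c_lt_x : c < x by rewrite ltn_neqAle cx andbT; apply/eqP => e; apply: NPc; rewrite e.
exact: (alt 0 b c x b_gt0 b_lt_c c_lt_x (conj D0 NP0) Pb (conj Dc NPc) Px).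
Qed.

Lemma no_alternation_cyclic_itv D P M : (forall x, D x -> x <= M) ->
  (forall x, P x -> D x) -> D 0 ->
  no_alternation P (fun x => D x /\ ~ P x) -> no_alternation (fun x => D x /\ ~ P x) P ->
  exists b c wrap, [/\ b <= M.+1, c <= M.+1 &
    forall x, D x -> P x <-> cyclic_itv b c wrap x].
Proof.
move=> DM PD D0 altP altNP.
have [P0|NP0] := pselect (P 0); last first.
  have [b [c [bM cM bcP]]] := no_alternation_itv DM PD D0 NP0 altNP.
  by exists b, c, false.
pose Q x := D x /\ ~ P x.
have DQ x : D x /\ ~ Q x <-> P x.
  split=> [[Dx NQx]|Px]; last by split=> [|[]]; [exact: PD|].
  by have [//|NPx] := pselect (P x); case: NQx.
have altQ : no_alternation (fun x => D x /\ ~ Q x) Q.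
  by move=> x y z w xy yz zw /DQ Px Qy /DQ Pz Qw; exact: (altP x y z w).
have [b [c [bM cM bcQ]]] := no_alternation_itv (P := Q) DM (fun x '(conj Dx _) => Dx) D0
  (fun '(conj _ NP0) => NP0 P0) altQ.
exists b, c, true; split=> // x Dx; rewrite -(DQ x) (bcQ x Dx) /=.
split=> [[_ /negP]|xbc]; first by rewrite negb_and -ltnNge -leqNgt.
by split=> // /andP[bx xc]; move: xbc; rewrite ltnNge bx leqNgt xc.
Qed.

End CyclicIntervals.

Section Coding.
Variable R : realType.
Variable G : nat -> R -> R.
Hypotheses (GD1 : forall k t, G k (t + 1) = G k t + 1)
  (G_mono : forall k, {homo G k : x y / x <= y}).
Variables (n N : nat).

Definition cell k u : int := Num.floor (N%:R * G k u).

Definition code u : nat := `|(\sum_(k < n) (cell k u - cell k 0))%R|%N.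

Lemma cell_mono k : {homo cell k : u v / u <= v}.
Proof. by move=> u v uv; apply: le_floor; rewrite ler_wpM2l ?ler0n ?G_mono. Qed.

Lemma cell_shift_itv k u : 0 <= u <= 1 -> 0 <= cell k u - cell k 0 <= N%:Z.
Proof.
move=> /andP[u0 u1]; rewrite subr_ge0 cell_mono //=.
have cell1 : cell k 1 = cell k 0 + N%:Z.
  have G1 := GD1 k 0; rewrite add0r in G1.
  by rewrite /cell G1 mulrDr mulr1 floorDrz ?natr_int // pmulrn intrKfloor.
by rewrite lerBlDr addrC -cell1 cell_mono.
Qed.

Lemma codeE u : 0 <= u -> (code u)%:Z = \sum_(k < n) (cell k u - cell k 0).
Proof.
move=> u0; rewrite gez0_abs // sumr_ge0 // => k _.
by rewrite subr_ge0 cell_mono.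
Qed.

Lemma code0 : code 0 = 0%N.
Proof. by rewrite /code big1 // => k _; rewrite subrr. Qed.

Lemma code_le u : 0 <= u <= 1 -> (code u <= n * N)%N.
Proof.
move=> /[dup] u01 /andP[u0 _]; rewrite -lez_nat codeE //.
apply: le_trans (_ : \sum_(k < n) N%:Z <= _); last by rewrite sumr_const card_ord; lia.
by apply: ler_sum => k _; have /andP[] := cell_shift_itv k u01.
Qed.

Lemma code_mono u v : 0 <= u -> u <= v -> (code u <= code v)%N.
Proof.
move=> u0 uv; rewrite -lez_nat !codeE ?(le_trans u0) //.
by apply: ler_sum => k _; rewrite lerD2r cell_mono.
Qed.

Lemma code_lt u v : 0 <= u -> 0 <= v -> (code u < code v)%N -> u < v.
Proof.
move=> u0 v0 lt_uv; rewrite ltNge; apply/negP => /(code_mono v0).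
by rewrite leqNgt lt_uv.
Qed.

Lemma code_eq_cell u v : 0 <= u -> u <= v -> code u = code v ->
  forall k : 'I_n, cell k u = cell k v.
Proof.
move=> u0 uv e k.
have v0 := le_trans u0 uv.
have : \sum_(k < n) (cell k v - cell k u) = (code v)%:Z - (code u)%:Z.
  by rewrite !codeE // -sumrB; apply: eq_bigr => i _; ring.
rewrite e subrr.
have cell_le (i : 'I_n) : true -> 0 <= cell i v - cell i u by rewrite subr_ge0 cell_mono.
by move/(psumr_eq0P cell_le)/(_ k isT)/eqP; rewrite subr_eq0 => /eqP.
Qed.

Lemma cell_eq_close k u v : (0 < N)%N -> cell k u = cell k v ->
  `|G k u - G k v| < N%:R^-1.
Proof.
move=> N_gt0 e; have N0 : 0 < N%:R :> R by rewrite ltr0n.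
have := floor_itv (N%:R * G k u); have := floor_itv (N%:R * G k v).
rewrite -/(cell k u) -/(cell k v) e intrD => /andP[a1 a2] /andP[b1 b2].
rewrite -[_^-1]mulr1 ltr_pdivlMl // -[N%:R]ger0_norm ?ler0n // -normrM mulrBr.
by rewrite ltr_norml; apply/andP; split; lra.
Qed.

Lemma code_eq_close u v k : (0 < N)%N -> 0 <= u -> 0 <= v -> code u = code v ->
  (k < n)%N -> `|G k u - G k v| < N%:R^-1.
Proof.
move=> N_gt0 u0 v0 e kn; have [uv|vu] := leP u v.
  exact/cell_eq_close/(code_eq_cell u0 uv e (Ordinal kn)).
rewrite distrC; exact/cell_eq_close/(code_eq_cell v0 (ltW vu) (esym e) (Ordinal kn)).
Qed.

Definition code_value x := exists u, 0 <= u < 1 /\ code u = x.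

Definition meets_code (A : set (R * R)) x :=
  exists u, [/\ 0 <= u < 1, A (expc u) & code u = x].

Lemma meets_code_cyclic_itv A : CS1 A -> exists b c wrap,
  [/\ (b <= (n * N).+1)%N, (c <= (n * N).+1)%N &
    forall x, code_value x -> meets_code A x <-> cyclic_itv b c wrap x].
Proof.
move=> [_ [AS [_ Acon]]].
have lt_of_code x y ux uy : 0 <= ux < 1 -> code ux = x ->
    0 <= uy < 1 -> code uy = y -> (x < y)%N -> ux < uy.
  by move=> /andP[ux0 _] <- /andP[uy0 _] <-; apply: code_lt.
have outside x u : ~ meets_code A x -> 0 <= u < 1 -> code u = x -> ~ A (expc u).
  by move=> NAx hu ex Au; apply: NAx; exists u.
apply: no_alternation_cyclic_itv.
- by move=> x [u [/andP[u0 /ltW u1] <-]]; apply: code_le; rewrite u0.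
- by move=> x [u [hu _ ex]]; exists u.
- by exists 0; rewrite code0 lexx ltr01.
- move=> x y z w xy yz zw [ux [hx Ax ex]] [[uy [hy ey]] NAy] [uz [hz Az ez]]
    [[uw [hw ew]] NAw].
  have l1 := lt_of_code _ _ _ _ hx ex hy ey xy.
  have l2 := lt_of_code _ _ _ _ hy ey hz ez yz.
  have l3 := lt_of_code _ _ _ _ hz ez hw ew zw.
  apply: (connected_S1_no_alternation Acon AS l1 l2 l3 _ Ax (outside _ _ NAy hy ey) Az
    (outside _ _ NAw hw ew)).
  by move: hx hw => /andP[? ?] /andP[? ?]; lra.
- move=> x y z w xy yz zw [[ux [hx ex]] NAx] [uy [hy Ay ey]] [[uz [hz ez]] NAz]
    [uw [hw Aw ew]].
  have l1 := lt_of_code _ _ _ _ hx ex hy ey xy.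
  have l2 := lt_of_code _ _ _ _ hy ey hz ez yz.
  have l3 := lt_of_code _ _ _ _ hz ez hw ew zw.
  (* the alternation wraps around the circle: [expc ux = expc (ux + 1)] *)
  apply: (connected_S1_no_alternation (d := ux + 1) Acon AS l2 l3 _ _ Ay
    (outside _ _ NAz hz ez) Aw).
  + by move: hx hw => /andP[? ?] /andP[? ?]; lra.
  + by rewrite ltrD2r.
  + by rewrite expcD1; apply: (outside _ _ NAx hx ex).
Qed.

End Coding.

Section HausdorffDistance.
Variable R : realType.
Implicit Types (p q : R * R) (X Y : set (R * R)).

Lemma pdist_ge0 p q : 0 <= pdist p q.
Proof. exact: sqrtr_ge0. Qed.

Lemma pdistC p q : pdist p q = pdist q p.
Proof. by rewrite /pdist; congr Num.sqrt; ring. Qed.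

Lemma hausdorff_dist_le X Y r : X !=set0 -> Y !=set0 ->
  (forall x, X x -> exists2 y, Y y & pdist x y <= r) ->
  (forall y, Y y -> exists2 x, X x & pdist x y <= r) ->
  hausdorff_dist X Y <= r.
Proof.
move=> [x0 Xx0] [y0 Yy0] XY YX.
have inf_ge0 (Z : set (R * R)) (g : R * R -> R) : (forall z, 0 <= g z) ->
  has_lbound [set g z | z in Z] by move=> g0; exists 0 => _ [z _ <-].
rewrite /hausdorff_dist ge_max; apply/andP; split; apply: ge_sup.
- by exists (inf [set pdist x0 y | y in Y]), x0.
- move=> _ [x Xx <-]; have [y Yy xy] := XY x Xx; apply: le_trans xy.
  by apply: ge_inf; [exact: inf_ge0 (pdist_ge0 x) | exists y].
- by exists (inf [set pdist x y0 | x in X]), y0.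
- move=> _ [y Yy <-]; have [x Xx xy] := YX y Yy; apply: le_trans xy.
  by apply: ge_inf; [exact: inf_ge0 (pdist_ge0^~ y) | exists x].
Qed.

Lemma iter_Cmap (f : R * R -> R * R) k X : iter k (Cmap f) X = iter k f @` X.
Proof. by elim: k => [|k IH] /=; [rewrite image_id | rewrite IH /Cmap image_comp]. Qed.

End HausdorffDistance.

Section SeparatedSets.
Variable R : realType.
Variables (f : R * R -> R * R) (F : R -> R) (s : R).
Hypotheses (hs : s = 1 \/ s = -1) (lift : is_lift f F).
Hypotheses (Fd : forall t, F (t + 1) = F t + s)
  (mono : forall x y, x < y -> s * F x < s * F y).
Variables (n N : nat).
Hypothesis N_gt0 : (0 < N)%N.

Local Notation G := (oriented_iter F s).
Local Notation code_value := (code_value G n N).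
Local Notation meets_code := (meets_code G n N).

Lemma meets_code_close A A' k p : CS1 A ->
  (forall x, code_value x -> meets_code A x -> meets_code A' x) -> (k < n)%N -> A p ->
  exists2 p', A' p' & pdist (iter k f p) (iter k f p') <= 4 * pi / N%:R.
Proof.
move=> [_ [AS _]] AA' kn Ap.
have [u [u0 u1 eu]] := S1_expc_itv 0 (AS _ Ap); rewrite add0r in u1.
have hu : 0 <= u < 1 by rewrite u0 u1.
rewrite -eu in Ap *.
have [u' [hu' A'u' e']] :=
  AA' _ (ex_intro _ u (conj hu erefl)) (ex_intro _ u (And3 hu Ap erefl)).
exists (expc u') => //; rewrite !(iter_lift lift).
apply: le_trans (pdist_expc_le _ _) _.
rewrite ler_pM2l ?mulr_gt0 ?pi_gt0 // -(dist_oriented_iter F hs) ltW //.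
have /andP[u'0 _] := hu'.
exact: (code_eq_close (oriented_iter_mono hs mono) N_gt0 u0 u'0 (esym e') kn).
Qed.

Lemma same_codes_hausdorff_le A A' k : CS1 A -> CS1 A' ->
  (forall x, code_value x -> meets_code A x <-> meets_code A' x) -> (k < n)%N ->
  hausdorff_dist (iter k (Cmap f) A) (iter k (Cmap f) A') <= 4 * pi / N%:R.
Proof.
move=> CA CA' AA' kn; rewrite !iter_Cmap.
have [[p Ap] _] := CA; have [[p' A'p'] _] := CA'.
apply: hausdorff_dist_le; [by exists (iter k f p), p | by exists (iter k f p'), p' | |].
- move=> _ [q Aq <-].
  have [q' A'q' h] := meets_code_close CA (fun x v => proj1 (AA' x v)) kn Aq.
  by exists (iter k f q') => //; exists q'.
- move=> _ [q A'q <-].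
  have [q' Aq' h] := meets_code_close CA' (fun x v => proj2 (AA' x v)) kn A'q.
  by exists (iter k f q'); [exists q' | rewrite pdistC].
Qed.

Lemma separated_card_le e m (E : 'I_m -> set (R * R)) : 4 * pi / N%:R < e ->
  separated_family (@CS1 R) (@hausdorff_dist R) (Cmap f) n e E ->
  (m <= (n * N).+2 * (n * N).+2 * 2)%N.
Proof.
move=> eN [EC Esep].
have cyclic_code i : exists t : 'I_(n * N).+2 * 'I_(n * N).+2 * bool,
    forall x, code_value x -> meets_code (E i) x <-> cyclic_itv t.1.1 t.1.2 t.2 x.
  have [b [c [wrap [bM cM bcE]]]] :=
    meets_code_cyclic_itv (oriented_iterD1 hs Fd) (oriented_iter_mono hs mono) n N (EC i).
  by exists (Ordinal (bM : b < (n * N).+2)%N, Ordinal (cM : c < (n * N).+2)%N, wrap).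
have [cd hcd] := choice cyclic_code.
suff /leq_card : injective cd by rewrite card_ord !card_prod !card_ord card_bool.
move=> i j eij; apply/eqP; apply: contraT => nij.
have [k kn hk] := Esep i j nij.
have same_codes x : code_value x -> meets_code (E i) x <-> meets_code (E j) x.
  by move=> v; rewrite (hcd i x v) (hcd j x v) eij.
by have := same_codes_hausdorff_le (EC i) (EC j) same_codes kn; lra.
Qed.

End SeparatedSets.

Section GrowthRate.
Variable R : realType.

Lemma quadratic_le_expR (C eta x : R) : 0 < C -> 0 < eta -> 0 <= x ->
  6 * C < eta ^+ 3 * x -> C * x ^+ 2 <= expR (eta * x).
Proof.
move=> C0 eta0 x0 Cx.
have := expR_ge1Dxn 2 (mulr_ge0 (ltW eta0) x0).
have -> : (3`!)%:R = 6 :> R by [].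
have -> : (eta * x) ^+ 3 = eta ^+ 3 * x * x ^+ 2 by ring.
have h6 : 6 * C * x ^+ 2 <= eta ^+ 3 * x * x ^+ 2 by rewrite ler_wpM2r ?sqr_ge0 // ltW.
have : C * x ^+ 2 <= eta ^+ 3 * x * x ^+ 2 / 6 by rewrite ler_pdivlMr //; lra.
lra.
Qed.

Lemma quadratic_growth_rate0 (a : nat -> R) (C : R) :
  (forall n, 1 <= a n <= C * n.+1%:R ^+ 2) ->
  (fun n => n%:R^-1 * ln (a n)) @ \oo --> 0.
Proof.
move=> aC.
have C0 : 0 < C by have /andP[a1 a2] := aC 0%N; rewrite expr1n mulr1 in a2; lra.
apply/cvgr0Pnorm_le => eta eta0.
have eta3 : 0 < eta ^+ 3 by rewrite exprn_gt0.
exists (Num.truncn (24 * C / eta ^+ 3)).+1 => // n /= Kn.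
have n1 : (1 <= n)%N by apply: leq_trans Kn.
have n0 : 0 < n%:R :> R by rewrite ltr0n.
have /andP[a1 a2] := aC n.
rewrite ger0_norm ?mulr_ge0 ?invr_ge0 ?ler0n ?ln_ge0 // ler_pdivrMl // mulrC.
have an : a n <= 4 * C * n%:R ^+ 2.
  apply: le_trans a2 _; rewrite [4 * C]mulrC -mulrA ler_pM2l //.
  by rewrite -!natrX -natrM ler_nat; nia.
have nK : 24 * C < eta ^+ 3 * n%:R.
  have := truncnS_gt (24 * C / eta ^+ 3); rewrite ltr_pdivrMr // => h.
  have : (Num.truncn (24 * C / eta ^+ 3)).+1%:R <= n%:R :> R by rewrite ler_nat.
  nra.
have le_exp : 4 * C * n%:R ^+ 2 <= expR (eta * n%:R).
  by apply: quadratic_le_expR; rewrite ?mulr_gt0 ?ltW //; lra.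
rewrite -[eta * _]expRK ler_ln ?posrE ?expR_gt0 ?(lt_le_trans ltr01 a1) //.
exact: le_trans an le_exp.
Qed.

Lemma limn_esup_elog_quadratic (a : nat -> \bar R) (C : R) :
  (forall n, (1 <= a n <= (C * n.+1%:R ^+ 2)%:E)%E) ->
  limn_esup (fun n => (n%:R^-1)%:E * elog (a n))%E = 0%E.
Proof.
move=> aC.
have a_fin n : a n = (fine (a n))%:E.
  by move: (aC n); case: (a n) => // /andP[_]; rewrite leye_eq.
have faC n : 1 <= fine (a n) <= C * n.+1%:R ^+ 2.
  by move: (aC n); rewrite {1 2}(a_fin n) !lee_fin.
have -> : (fun n => (n%:R^-1)%:E * elog (a n))%E =
    (fun n => (n%:R^-1 * ln (fine (a n)))%:E).
  by apply: funext => n; rewrite {1}(a_fin n).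
suff /cvg_limn_einf_sup[_ ->] :
  (fun n => (n%:R^-1 * ln (fine (a n)))%:E) @ \oo --> 0%E by [].
by apply: cvg_EFin; [exact: nearW | exact: quadratic_growth_rate0 faC].
Qed.

End GrowthRate.

Section Entropy.
Variable R : realType.
Variable f : R * R -> R * R.

Lemma CS1_point : @CS1 R [set (1, 0)].
Proof.
split; first by exists (1, 0).
split; first by move=> p ->; rewrite /S1 /= expr1n expr0n addr0.
by split; [exact: compact_set1 | exact: connected1].
Qed.

Lemma max_separated_ge1 n e :
  (1 <= max_separated (@CS1 R) (@hausdorff_dist R) (Cmap f) n e)%E.
Proof.
apply: ereal_sup_ubound; exists 1%N => //; exists (fun=> [set (1, 0)]).
by split=> [i|i j]; [exact: CS1_point | rewrite !ord1 eqxx].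
Qed.

Variables (F : R -> R) (s : R).
Hypotheses (hs : s = 1 \/ s = -1) (lift : is_lift f F).
Hypotheses (Fd : forall t, F (t + 1) = F t + s)
  (mono : forall x y, x < y -> s * F x < s * F y).

Lemma max_separated_le n N e : (0 < N)%N -> 4 * pi / N%:R < e ->
  (max_separated (@CS1 R) (@hausdorff_dist R) (Cmap f) n e
    <= ((2 * N.+2%:R ^+ 2) * n.+1%:R ^+ 2)%:E)%E.
Proof.
move=> N0 eN; apply: ge_ereal_sup => _ [m [E sepE] <-]; rewrite lee_fin.
apply: le_trans (_ : ((n * N).+2 * (n * N).+2 * 2)%N%:R <= _).
  by rewrite ler_nat (separated_card_le hs lift Fd mono N0 eN sepE).
by rewrite -!natrX -!natrM ler_nat; nia.
Qed.

Lemma entropy_rate_eq0 e : 0 < e ->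
  limn_esup (fun n => (n%:R^-1)%:E *
    elog (max_separated (@CS1 R) (@hausdorff_dist R) (Cmap f) n e))%E = 0%E.
Proof.
move=> e0; pose N := (Num.truncn (4 * pi / e)).+1.
have eN : 4 * pi / N%:R < e.
  have := truncnS_gt (4 * pi / e).
  by rewrite ltr_pdivrMr // ltr_pdivrMr ?ltr0n // [e * _]mulrC.
apply: (limn_esup_elog_quadratic (C := 2 * N.+2%:R ^+ 2)) => n.
by rewrite max_separated_ge1 max_separated_le.
Qed.

End Entropy.

Theorem theorem5p2 (R : realType) (f : R * R -> R * R) :
  morse_smale f ->
  topological_entropy (@CS1 R) (@hausdorff_dist R) (Cmap f) = 0%E.
Proof.
move=> [F [diffeo _]]; have [s hs [Fd mono]] := C1_diffeo_S1_lift diffeo.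
have lift : is_lift f F by case: diffeo => _ [].
rewrite /topological_entropy (eq_imagel (f' := cst 0%E)) ?ereal_sup_cst //.
  by apply/set0P; exists 1; rewrite /= ltr01.
by move=> e /= e0; have := entropy_rate_eq0 hs lift Fd mono e0.
Qed.
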